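(* The subspaces $\mathcal{C}_0^{sym}$ and $\mathcal{C}_0^{cw}$ of $\mathcal{C}$ are orthogonal with respect to the mixed area: $A(\gamma_1,\gamma_2)=0$ for all $\gamma_1\in\mathcal{C}_0^{sym}$ and $\gamma_2\in\mathcal{C}_0^{cw}$. Moreover both subspaces are orthogonal to $\mathcal{U}=\{\lambda u:\lambda\in\mathbb{R}\}$.
   Context: Standing setting. $[a,b]$ is the $2\times2$ determinant with columns $a,b$. The unit ball $U$ of a normed plane is compact convex, origin-symmetric, with nonempty interior, and boundary $u=\partial U$ a union of $2n$ arcs $u_{i+n}=-u_i$, each a smooth strictly convex arc or a segment; $u$ is parameterized as a closed curve $u:[0,2T]\to\mathbb{R}^2$ with $u(t+T)=-u(t)$, smooth with $u'\ne0$ on each interval $[t_i,t_{i+1}]$ between vertices ($[u',u'']\neq 0$ on strictly convex arcs); on each such interval $v(t)=u'(t)/[u(t),u'(t)]$. Admissible class $\mathcal{C}$: closed continuous curves $\gamma:[0,2T]\to\mathbb{R}^2$ (extended $2T$-periodically), smooth on each $[t_i,t_{i+1}]$ with $\gamma'(t)=r(t)u'(t)$ for a scalar function $r$. Dual length $L_*(\gamma)=\int_0^{2T} r(t)[u,u'](t)\,dt$; mixed area $A(\gamma_1,\gamma_2)=\frac12\int_0^{2T}[\gamma_1,\gamma_2'](t)\,dt$. $\mathcal{C}_0^{sym}$ is the set of $\gamma\in\mathcal{C}$ with $\gamma(t+T)=-\gamma(t)$ for all $t$ and $L_*(\gamma)=0$. $\mathcal{C}_0^{cw}$ is the set of $\gamma\in\mathcal{C}$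 with $L_*(\gamma)=0$ that are of constant width, i.e. $[\gamma(t+T),v(t+T)]+[\gamma(t),v(t)]=c$ for a constant $c$ (necessarily $c=0$ here). *)

From Stdlib Require Import Reals Lra.
From Coquelicot Require Import Coquelicot.
Open Scope R_scope.

Definition vec := (R * R)%type.

Definition vadd (a b : vec) : vec := (fst a + fst b, snd a + snd b).
Definition vopp (a : vec) : vec := (- fst a, - snd a).
Definition vscal (l : R) (a : vec) : vec := (l * fst a, l * snd a).
Definition vzero : vec := (0, 0).

Definition bracket (a b : vec) : R := fst a * snd b - snd a * fst b.

Definition vdist (a b : vec) : R :=
  sqrt ((fst a - fst b) ^ 2 + (snd a - snd b) ^ 2).

Definition dv (f : R -> vec) (t : R) : vec :=
  (Derive (fun s => fst (f s)) t, Derive (fun s => snd (f s)) t).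

Definition smoothR (f : R -> R) : Prop := forall (k : nat) (x : R), ex_derive_n f k x.
Definition smoothV (g : R -> vec) : Prop :=
  smoothR (fun s => fst (g s)) /\ smoothR (fun s => snd (g s)).

(** f is smooth on the closed interval [a,b]: it is the restriction of a
    smooth function on R. *)
Definition smooth_on (f : R -> vec) (a b : R) : Prop :=
  exists g : R -> vec, smoothV g /\ forall s, a <= s <= b -> f s = g s.

Definition pset := vec -> Prop.

Definition p_bounded (S : pset) : Prop :=
  exists M, forall p, S p -> Rabs (fst p) <= M /\ Rabs (snd p) <= M.
Definition p_in_closure (S : pset) (p : vec) : Prop :=
  forall eps, 0 < eps -> exists q, S q /\ vdist q p < eps.
Definition p_closed (S : pset) : Prop := forall p, p_in_closure S p -> S p.
Definition p_compact (S : pset) : Prop := p_bounded S /\ p_closed S.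
Definition p_interior (S : pset) (p : vec) : Prop :=
  exists eps, 0 < eps /\ forall q, vdist q p < eps -> S q.
Definition p_boundary (S : pset) (p : vec) : Prop :=
  p_in_closure S p /\ ~ p_interior S p.
Definition p_convex (S : pset) : Prop :=
  forall p q l, S p -> S q -> 0 <= l <= 1 ->
    S (vadd (vscal (1 - l) p) (vscal l q)).
Definition p_symmetric (S : pset) : Prop := forall p, S p -> S (vopp p).

(** ---- The standing setting ----
   U : unit ball; T > 0; the boundary is split into 2n arcs with parameter
   vertices tv 0 = 0 < tv 1 < ... < tv (2n) = 2T;  u : R -> R^2 is the
   parameterization (given on all of R, with u(t+T) = -u(t), hence
   2T-periodic). *)
Definition standing_setting (U : pset) (T : R) (n : nat) (tv : nat -> R)
    (u : R -> vec) : Prop :=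
  p_compact U /\ p_convex U /\ p_symmetric U /\ (exists p, p_interior U p) /\
  0 < T /\ (1 <= n)%nat /\
  tv 0%nat = 0 /\ tv (2 * n)%nat = 2 * T /\
  (forall i, (i < 2 * n)%nat -> tv i < tv (S i)) /\
  (forall i, (i <= n)%nat -> tv (i + n)%nat = tv i + T) /\
  (forall t, u (t + T) = vopp (u t)) /\
  (forall p, p_boundary U p <-> exists t, 0 <= t <= 2 * T /\ u t = p) /\
  (forall s t, 0 <= s < 2 * T -> 0 <= t < 2 * T -> u s = u t -> s = t) /\
  (forall i, (i < 2 * n)%nat ->
     exists g : R -> vec, smoothV g /\
       (forall s, tv i <= s <= tv (S i) -> u s = g s /\ dv g s <> vzero) /\
       ((forall s, tv i <= s <= tv (S i) -> bracket (dv g s) (dv (dv g) s) <> 0)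
        \/
        (exists p q, p <> q /\ forall s, tv i <= s <= tv (S i) ->
           exists l, 0 <= l <= 1 /\ u s = vadd (vscal (1 - l) p) (vscal l q)))).

Definition is_vertex (n : nat) (tv : nat -> R) (t : R) : Prop :=
  exists i, (i <= 2 * n)%nat /\ t = tv i.

(** v(t) = u'(t) / [u(t), u'(t)]  (meaningful off the vertices) *)
Definition vfield (u : R -> vec) (t : R) : vec :=
  vscal (/ bracket (u t) (dv u t)) (dv u t).

(** Admissible class C: closed continuous curves (extended 2T-periodically),
    smooth on each [t_i, t_(i+1)], with gamma' = r u' there (the derivative
    condition is imposed on the open arcs, where u' and gamma' are
    unambiguous). The scalar function r is carried as data. *)
Definition admissible (T : R) (n : nat) (tv : nat -> R) (u : R -> vec)
    (gamma : R -> vec) (r : R -> R) : Prop :=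
  (forall t, continuous (fun s => fst (gamma s)) t /\
             continuous (fun s => snd (gamma s)) t) /\
  (forall t, gamma (t + 2 * T) = gamma t) /\
  (forall i, (i < 2 * n)%nat -> smooth_on gamma (tv i) (tv (S i))) /\
  (forall i t, (i < 2 * n)%nat -> tv i < t < tv (S i) ->
     dv gamma t = vscal (r t) (dv u t)).

Definition Lstar (T : R) (u : R -> vec) (r : R -> R) : R :=
  RInt (fun t => r t * bracket (u t) (dv u t)) 0 (2 * T).

Definition mixed_area (T : R) (g1 g2 : R -> vec) : R :=
  / 2 * RInt (fun t => bracket (g1 t) (dv g2 t)) 0 (2 * T).

Definition in_C0_sym (T : R) (n : nat) (tv : nat -> R) (u : R -> vec)
    (gamma : R -> vec) (r : R -> R) : Prop :=
  admissible T n tv u gamma r /\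
  (forall t, gamma (t + T) = vopp (gamma t)) /\
  Lstar T u r = 0.

Definition in_C0_cw (T : R) (n : nat) (tv : nat -> R) (u : R -> vec)
    (gamma : R -> vec) (r : R -> R) : Prop :=
  admissible T n tv u gamma r /\
  Lstar T u r = 0 /\
  exists c : R, forall t, 0 <= t <= 2 * T -> ~ is_vertex n tv t ->
    bracket (gamma (t + T)) (vfield u (t + T)) + bracket (gamma t) (vfield u t) = c.

(** The proof rests on three facts about closed curves made of smooth arcs.
   - Integration by parts: [int_0^{2T} [a, b'] = int_0^{2T} [b, a']].  With
     [g' = r u'] off the vertices this gives [int [u, g'] = L_*(g)], hence
     [2 A(g, λu) = λ int [g, u'] = λ int [u, g'] = λ L_*(g)] and likewise
     [2 A(λu, g) = λ L_*(g)]: every curve of dual length 0 is orthogonal to R·u.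
   - Off the vertices [[u, u'] <> 0]: if the velocity [u'] were radial, moving
     along the boundary would overshoot [u(t)] radially, and since the convex
     body U contains a ball around the origin, [u(t)] would be interior.  So the
     constant-width condition on g2 reads [[g2(t) - g2(t+T), u'(t)] = c [u, u']].
   - Folding: [int_0^{2T} f = int_0^T (f(t) + f(t+T))].
   For g1 in C_0^sym, [g1'(t+T) = -g1'(t)] and [u'(t+T) = -u'(t)].  With
   [Q = [g2, g1']] and [M = [u, g1']] this gives [Q(t) + Q(t+T) = c M(t)] and
   [M(t+T) = M(t)], so folding twice yields
   [2 A(g1, g2) = int_0^{2T} Q = c int_0^T M = (c/2) L_*(g1) = 0]. *)

From Stdlib Require Import Reals Lra Lia.
From Coquelicot Require Import Coquelicot.
Open Scope R_scope.

Lemma vec_ext (a b : vec) : fst a = fst b -> snd a = snd b -> a = b.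
Proof. destruct a, b; simpl; intros; subst; reflexivity. Qed.

Lemma vec_eq_dec (a b : vec) : {a = b} + {a <> b}.
Proof.
  destruct a as [a1 a2], b as [b1 b2].
  destruct (Req_EM_T a1 b1), (Req_EM_T a2 b2); subst;
    [left; reflexivity | right; congruence | right; congruence | right; congruence].
Qed.

Lemma vdist_fst (a b : vec) : Rabs (fst a - fst b) <= vdist a b.
Proof.
  unfold vdist. rewrite <- sqrt_Rsqr_abs. apply sqrt_le_1_alt. unfold Rsqr.
  assert (0 <= (snd a - snd b) ^ 2) by apply pow2_ge_0.
  replace ((fst a - fst b) ^ 2) with ((fst a - fst b) * (fst a - fst b)) by ring. lra.
Qed.

Lemma vdist_snd (a b : vec) : Rabs (snd a - snd b) <= vdist a b.
Proof.
  unfold vdist. rewrite <- sqrt_Rsqr_abs. apply sqrt_le_1_alt. unfold Rsqr.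
  assert (0 <= (fst a - fst b) ^ 2) by apply pow2_ge_0.
  replace ((snd a - snd b) ^ 2) with ((snd a - snd b) * (snd a - snd b)) by ring. lra.
Qed.

Lemma vdist_le_l1 (a b : vec) :
  vdist a b <= Rabs (fst a - fst b) + Rabs (snd a - snd b).
Proof.
  unfold vdist.
  assert (H1 := Rabs_pos (fst a - fst b)). assert (H2 := Rabs_pos (snd a - snd b)).
  rewrite <- (sqrt_Rsqr (Rabs _ + Rabs _)) by lra. apply sqrt_le_1_alt. unfold Rsqr.
  rewrite <- (pow2_abs (fst a - fst b)), <- (pow2_abs (snd a - snd b)).
  revert H1 H2. generalize (Rabs (fst a - fst b)) (Rabs (snd a - snd b)).
  intros p q Hp Hq. nra.
Qed.

Lemma bracket_zero_proportional (x d : vec) :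
  x <> vzero -> bracket x d = 0 -> exists mu, d = vscal mu x.
Proof.
  destruct x as [x1 x2], d as [d1 d2]; unfold bracket, vscal, vzero; simpl.
  intros Hx Hw.
  destruct (Req_dec x1 0) as [Z|Z].
  - assert (x2 <> 0) by (intro; apply Hx; subst; reflexivity). subst x1.
    exists (d2 / x2). apply vec_ext; simpl; [|field; auto].
    assert (d1 = 0) by (apply (Rmult_eq_reg_l x2); lra). subst; ring.
  - exists (d1 / x1). apply vec_ext; simpl; [field; auto|].
    apply (Rmult_eq_reg_l x1); auto. field_simplify; auto. lra.
Qed.

Lemma smooth_ex_derive (f : R -> R) (x : R) : smoothR f -> ex_derive f x.
Proof. intros H. exact (H 1%nat x). Qed.

Lemma smooth_ex_derive_Derive (f : R -> R) (x : R) : smoothR f -> ex_derive (Derive f) x.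
Proof. intros H. exact (H 2%nat x). Qed.

Lemma smooth_continuous (f : R -> R) (x : R) : smoothR f -> continuous f x.
Proof.
  intros H. apply (ex_derive_continuous (K := R_AbsRing) (V := R_NormedModule)).
  exact (smooth_ex_derive f x H).
Qed.

Lemma smooth_Derive_continuous (f : R -> R) (x : R) : smoothR f -> continuous (Derive f) x.
Proof.
  intros H. apply (ex_derive_continuous (K := R_AbsRing) (V := R_NormedModule)).
  exact (smooth_ex_derive_Derive f x H).
Qed.

Lemma continuous_Rmult (f g : R -> R) (x : R) :
  continuous f x -> continuous g x -> continuous (fun y => f y * g y) x.
Proof. intros; apply (continuous_mult (U := R_UniformSpace) (K := R_AbsRing) f g); auto. Qed.

Lemma continuous_Rminus (f g : R -> R) (x : R) :
  continuous f x -> continuous g x -> continuous (fun y => f y - g y) x.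
Proof.
  intros; apply (continuous_minus (U := R_UniformSpace) (K := R_AbsRing)
                   (V := R_NormedModule) f g); auto.
Qed.

Lemma continuous_Rplus (f g : R -> R) (x : R) :
  continuous f x -> continuous g x -> continuous (fun y => f y + g y) x.
Proof.
  intros; apply (continuous_plus (U := R_UniformSpace) (K := R_AbsRing)
                   (V := R_NormedModule) f g); auto.
Qed.

Lemma continuous_Rscal (c : R) (f : R -> R) (x : R) :
  continuous f x -> continuous (fun y => c * f y) x.
Proof.
  intros. apply continuous_Rmult; auto. apply continuous_const.
Qed.

Lemma locally_eq_interior (f g : R -> R) (a b t : R) :
  a < t < b -> (forall s, a <= s <= b -> f s = g s) -> locally t (fun s => f s = g s).
Proof.
  intros Ht H.
  assert (Hp : 0 < Rmin (t - a) (b - t)) by (apply Rmin_pos; lra).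
  exists (mkposreal _ Hp). intros y Hy. apply H.
  unfold ball in Hy; simpl in Hy;
    unfold AbsRing_ball, abs, minus, plus, opp in Hy; simpl in Hy.
  assert (H1 := Rmin_l (t - a) (b - t)). assert (H2 := Rmin_r (t - a) (b - t)).
  apply Rabs_def2 in Hy. lra.
Qed.

Lemma dv_eq_interior (g G : R -> vec) (a b t : R) :
  a < t < b -> (forall s, a <= s <= b -> g s = G s) -> dv g t = dv G t.
Proof.
  intros Ht H. unfold dv. f_equal; apply Derive_ext_loc;
    apply (locally_eq_interior _ _ a b); auto; intros s Hs; rewrite H; auto.
Qed.

Lemma is_derive_dv_interior (g G : R -> vec) (a b t : R) :
  a < t < b -> (forall s, a <= s <= b -> g s = G s) -> smoothV G ->
  is_derive (fun s => fst (g s)) t (fst (dv g t)) /\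
  is_derive (fun s => snd (g s)) t (snd (dv g t)).
Proof.
  intros Ht H [S1 S2]. rewrite (dv_eq_interior g G a b t Ht H). unfold dv; simpl. split.
  - apply (is_derive_ext_loc (fun s => fst (G s))).
    + apply (locally_eq_interior _ _ a b); auto. intros s Hs; rewrite H; auto.
    + apply Derive_correct, smooth_ex_derive, S1.
  - apply (is_derive_ext_loc (fun s => snd (G s))).
    + apply (locally_eq_interior _ _ a b); auto. intros s Hs; rewrite H; auto.
    + apply Derive_correct, smooth_ex_derive, S2.
Qed.

(** Values at the vertices are irrelevant for integrals. *)

Definition arcwise_continuous (tv : nat -> R) (j k : nat) (f : R -> R) : Prop :=
  forall i, (j <= i < k)%nat -> exists F : R -> R,
    (forall t, tv i <= t <= tv (S i) -> continuous F t) /\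
    (forall t, tv i < t < tv (S i) -> f t = F t).

Definition arcwise_smooth (tv : nat -> R) (j k : nat) (a : R -> vec) : Prop :=
  forall i, (j <= i < k)%nat -> smooth_on a (tv i) (tv (S i)).

Definition increasing_on (tv : nat -> R) (j k : nat) : Prop :=
  forall i, (j <= i < k)%nat -> tv i < tv (S i).

Section ArcwiseContinuous.

Variables (tv : nat -> R) (j k : nat).

Lemma arcwise_continuous_mult (f g : R -> R) :
  arcwise_continuous tv j k f -> arcwise_continuous tv j k g ->
  arcwise_continuous tv j k (fun t => f t * g t).
Proof.
  intros Hf Hg i Hi. destruct (Hf i Hi) as [F [F1 F2]]. destruct (Hg i Hi) as [G [G1 G2]].
  exists (fun t => F t * G t). split.
  - intros; apply continuous_Rmult; auto.
  - intros t Ht; rewrite F2, G2; auto.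
Qed.

Lemma arcwise_continuous_minus (f g : R -> R) :
  arcwise_continuous tv j k f -> arcwise_continuous tv j k g ->
  arcwise_continuous tv j k (fun t => f t - g t).
Proof.
  intros Hf Hg i Hi. destruct (Hf i Hi) as [F [F1 F2]]. destruct (Hg i Hi) as [G [G1 G2]].
  exists (fun t => F t - G t). split.
  - intros; apply continuous_Rminus; auto.
  - intros t Ht; rewrite F2, G2; auto.
Qed.

Lemma arcwise_continuous_scal (c : R) (f : R -> R) :
  arcwise_continuous tv j k f -> arcwise_continuous tv j k (fun t => c * f t).
Proof.
  intros Hf i Hi. destruct (Hf i Hi) as [F [F1 F2]].
  exists (fun t => c * F t). split.
  - intros; apply continuous_Rscal; auto.
  - intros t Ht; rewrite F2; auto.
Qed.

Lemma arcwise_continuous_bracket (p q : R -> vec) :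
  arcwise_continuous tv j k (fun t => fst (p t)) ->
  arcwise_continuous tv j k (fun t => snd (p t)) ->
  arcwise_continuous tv j k (fun t => fst (q t)) ->
  arcwise_continuous tv j k (fun t => snd (q t)) ->
  arcwise_continuous tv j k (fun t => bracket (p t) (q t)).
Proof.
  intros. unfold bracket. apply arcwise_continuous_minus; apply arcwise_continuous_mult; auto.
Qed.

Lemma arcwise_smooth_continuous (a : R -> vec) : arcwise_smooth tv j k a ->
  arcwise_continuous tv j k (fun t => fst (a t)) /\
  arcwise_continuous tv j k (fun t => snd (a t)) /\
  arcwise_continuous tv j k (fun t => fst (dv a t)) /\
  arcwise_continuous tv j k (fun t => snd (dv a t)).
Proof.
  intros H. repeat split; intros i Hi; destruct (H i Hi) as [A [[S1 S2] HA]].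
  - exists (fun t => fst (A t)). split; [intros; apply smooth_continuous; auto|].
    intros t Ht; rewrite HA; auto; lra.
  - exists (fun t => snd (A t)). split; [intros; apply smooth_continuous; auto|].
    intros t Ht; rewrite HA; auto; lra.
  - exists (fun t => Derive (fun s => fst (A s)) t).
    split; [intros; apply smooth_Derive_continuous; auto|].
    intros t Ht. rewrite (dv_eq_interior a A (tv i) (tv (S i)) t Ht HA). reflexivity.
  - exists (fun t => Derive (fun s => snd (A s)) t).
    split; [intros; apply smooth_Derive_continuous; auto|].
    intros t Ht. rewrite (dv_eq_interior a A (tv i) (tv (S i)) t Ht HA). reflexivity.
Qed.

Lemma arcwise_continuous_bracket_dv (a b : R -> vec) :
  arcwise_smooth tv j k a -> arcwise_smooth tv j k b ->
  arcwise_continuous tv j k (fun t => bracket (a t) (dv b t)).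
Proof.
  intros Ha Hb. destruct (arcwise_smooth_continuous a Ha) as [? [? [? ?]]].
  destruct (arcwise_smooth_continuous b Hb) as [? [? [? ?]]].
  apply arcwise_continuous_bracket; auto.
Qed.

Lemma arcwise_continuous_dv_bracket (a b : R -> vec) :
  arcwise_smooth tv j k a -> arcwise_smooth tv j k b ->
  arcwise_continuous tv j k (fun t => bracket (dv a t) (b t)).
Proof.
  intros Ha Hb. destruct (arcwise_smooth_continuous a Ha) as [? [? [? ?]]].
  destruct (arcwise_smooth_continuous b Hb) as [? [? [? ?]]].
  apply arcwise_continuous_bracket; auto.
Qed.

Hypothesis tv_increasing : increasing_on tv j k.

Lemma ex_RInt_arc (g : R -> R) (i : nat) :
  (j <= i < k)%nat -> arcwise_continuous tv j k g -> ex_RInt g (tv i) (tv (S i)).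
Proof.
  intros Hi Hg. assert (Hlt := tv_increasing i Hi). destruct (Hg _ Hi) as [F [HF1 HF2]].
  apply (ex_RInt_ext F).
  - intros x Hx. rewrite Rmin_left, Rmax_right in Hx by lra. symmetry; apply HF2; lra.
  - apply (ex_RInt_continuous (V := R_CompleteNormedModule)). intros z Hz.
    rewrite Rmin_left, Rmax_right in Hz by lra. apply HF1; lra.
Qed.

Lemma ex_RInt_arcs (g : R -> R) : arcwise_continuous tv j k g ->
  forall d, (j + d <= k)%nat -> ex_RInt g (tv j) (tv (j + d)%nat).
Proof.
  intros Hg d. induction d; intros Hd.
  - rewrite Nat.add_0_r. apply ex_RInt_point.
  - replace (j + S d)%nat with (S (j + d)) by lia.
    apply (ex_RInt_Chasles _ _ (tv (j + d)%nat)); [apply IHd; lia|].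
    apply ex_RInt_arc; auto; lia.
Qed.

Lemma is_RInt_arcs_ext (f g : R -> R) : arcwise_continuous tv j k g ->
  (forall i t, (j <= i < k)%nat -> tv i < t < tv (S i) -> f t = g t) ->
  forall d, (j + d <= k)%nat ->
  is_RInt f (tv j) (tv (j + d)%nat) (RInt g (tv j) (tv (j + d)%nat)).
Proof.
  intros Hg Hfg d. induction d; intros Hd.
  - rewrite Nat.add_0_r, RInt_point. exact (is_RInt_point f (tv j)).
  - assert (Hi : (j <= j + d < k)%nat) by lia.
    assert (Hlt := tv_increasing _ Hi).
    assert (Hex := ex_RInt_arc g _ Hi Hg).
    replace (j + S d)%nat with (S (j + d)) by lia.
    rewrite <- (RInt_Chasles g (tv j) (tv (j + d)%nat)); [| apply ex_RInt_arcs; auto; lia | exact Hex].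
    apply (is_RInt_Chasles f _ (tv (j + d)%nat)); [apply IHd; lia|].
    apply (is_RInt_ext g).
    + intros x Hx. rewrite Rmin_left, Rmax_right in Hx by lra.
      symmetry; apply Hfg with (i := (j + d)%nat); auto.
    + exact (RInt_correct _ _ _ Hex).
Qed.

Lemma is_RInt_arcwise (f g : R -> R) : (j <= k)%nat -> arcwise_continuous tv j k g ->
  (forall i t, (j <= i < k)%nat -> tv i < t < tv (S i) -> f t = g t) ->
  is_RInt f (tv j) (tv k) (RInt g (tv j) (tv k)).
Proof.
  intros Hjk Hg Hfg.
  assert (E : tv k = tv (j + (k - j))%nat) by (f_equal; lia). rewrite E.
  apply is_RInt_arcs_ext; auto; lia.
Qed.

End ArcwiseContinuous.

Lemma is_RInt_unique_R (f : R -> R) (a b l : R) : is_RInt f a b l -> RInt f a b = l.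
Proof. intros H. exact (@is_RInt_unique R_CompleteNormedModule f a b l H). Qed.

Lemma is_RInt_shift (f : R -> R) (a b c l : R) :
  is_RInt f (a + c) (b + c) l -> is_RInt (fun t => f (t + c)) a b l.
Proof.
  intros H. assert (H' : is_RInt f (1 * a + c) (1 * b + c) l) by (rewrite !Rmult_1_l; auto).
  assert (H2 := is_RInt_comp_lin f 1 c a b l H').
  apply (is_RInt_ext _ (fun t => f (t + c)) a b l) in H2; [exact H2|].
  intros x _. unfold scal; simpl; unfold mult; simpl. rewrite !Rmult_1_l. reflexivity.
Qed.

Lemma RInt_scal_of_is_RInt (f : R -> R) (a b c l : R) :
  is_RInt f a b l -> RInt (fun t => c * f t) a b = c * l.
Proof. intros H. apply is_RInt_unique_R. exact (is_RInt_scal f a b c l H). Qed.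

(** ** Integration by parts for arcwise smooth curves *)

Lemma is_derive_bracket_form (f g h k : R -> R) (x : R) :
  ex_derive f x -> ex_derive g x -> ex_derive h x -> ex_derive k x ->
  is_derive (fun t => f t * g t - h t * k t) x
    (Derive f x * g x + f x * Derive g x - (Derive h x * k x + h x * Derive k x)).
Proof. intros. auto_derive; [tauto|]. rewrite !Rmult_1_l. reflexivity. Qed.

(** On a single arc: [[a, b]' = [a', b] + [a, b']] and the fundamental theorem
    of calculus. *)
Lemma is_RInt_bracket_arc (a b A B : R -> vec) (lo hi : R) :
  lo < hi -> smoothV A -> smoothV B ->
  (forall s, lo <= s <= hi -> a s = A s) -> (forall s, lo <= s <= hi -> b s = B s) ->
  is_RInt (fun t => bracket (dv a t) (b t) + bracket (a t) (dv b t)) lo hi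
    (bracket (a hi) (b hi) - bracket (a lo) (b lo)).
Proof.
  intros Hlh [SA1 SA2] [SB1 SB2] HA HB.
  apply (is_RInt_ext (fun t => bracket (dv A t) (B t) + bracket (A t) (dv B t))).
  { intros x Hx. rewrite Rmin_left, Rmax_right in Hx by lra.
    rewrite (dv_eq_interior a A lo hi x Hx HA), (dv_eq_interior b B lo hi x Hx HB), HA, HB;
      auto; lra. }
  rewrite HA, HB, (HA lo), (HB lo); try lra.
  apply (is_RInt_derive (fun t => bracket (A t) (B t))).
  - intros x _.
    assert (D := is_derive_bracket_form (fun t => fst (A t)) (fun t => snd (B t))
                   (fun t => snd (A t)) (fun t => fst (B t)) x
                   (smooth_ex_derive _ x SA1) (smooth_ex_derive _ x SB2)
                   (smooth_ex_derive _ x SA2) (smooth_ex_derive _ x SB1)).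
    unfold bracket, dv; simpl. replace (Derive (fun s => fst (A s)) x * snd (B x) -
      Derive (fun s => snd (A s)) x * fst (B x) +
      (fst (A x) * Derive (fun s => snd (B s)) x - snd (A x) * Derive (fun s => fst (B s)) x))
      with (Derive (fun t => fst (A t)) x * snd (B x) + fst (A x) * Derive (fun t => snd (B t)) x -
      (Derive (fun t => snd (A t)) x * fst (B x) + snd (A x) * Derive (fun t => fst (B t)) x))
      by ring.
    exact D.
  - intros x _. unfold bracket, dv; simpl.
    apply continuous_Rplus; apply continuous_Rminus; apply continuous_Rmult;
      first [apply smooth_Derive_continuous; auto | apply smooth_continuous; auto].
Qed.

(** Summing over the arcs [0..k-1]: the bracket telescopes. *)
Lemma is_RInt_bracket_arcs (tv : nat -> R) (m : nat) (a b : R -> vec) :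
  increasing_on tv 0 m -> arcwise_smooth tv 0 m a -> arcwise_smooth tv 0 m b ->
  forall k, (k <= m)%nat ->
  is_RInt (fun t => bracket (dv a t) (b t) + bracket (a t) (dv b t)) (tv 0%nat) (tv k)
    (bracket (a (tv k)) (b (tv k)) - bracket (a (tv 0%nat)) (b (tv 0%nat))).
Proof.
  intros Hm Ha Hb k. induction k; intros Hk.
  - rewrite Rminus_diag. exact (is_RInt_point _ (tv 0%nat)).
  - assert (Hi : (0 <= k < m)%nat) by lia.
    destruct (Ha k Hi) as [A [SA HA]]. destruct (Hb k Hi) as [B [SB HB]].
    replace (bracket (a (tv (S k))) (b (tv (S k))) - bracket (a (tv 0%nat)) (b (tv 0%nat))) with
      ((bracket (a (tv k)) (b (tv k)) - bracket (a (tv 0%nat)) (b (tv 0%nat))) +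
       (bracket (a (tv (S k))) (b (tv (S k))) - bracket (a (tv k)) (b (tv k)))) by ring.
    exact (is_RInt_Chasles _ _ _ _ _ _ (IHk ltac:(lia))
             (is_RInt_bracket_arc a b A B _ _ (Hm k Hi) SA SB HA HB)).
Qed.

Lemma RInt_bracket_by_parts (tv : nat -> R) (m : nat) (a b : R -> vec) :
  increasing_on tv 0 m -> arcwise_smooth tv 0 m a -> arcwise_smooth tv 0 m b ->
  RInt (fun t => bracket (a t) (dv b t)) (tv 0%nat) (tv m) =
  bracket (a (tv m)) (b (tv m)) - bracket (a (tv 0%nat)) (b (tv 0%nat)) +
  RInt (fun t => bracket (b t) (dv a t)) (tv 0%nat) (tv m).
Proof.
  intros Hm Ha Hb.
  assert (X := is_RInt_arcwise tv 0 m Hm _ _ (Nat.le_0_l m)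
                 (arcwise_continuous_bracket_dv tv 0 m a b Ha Hb) (fun _ _ _ _ => eq_refl)).
  assert (Y := is_RInt_arcwise tv 0 m Hm _ _ (Nat.le_0_l m)
                 (arcwise_continuous_dv_bracket tv 0 m a b Ha Hb) (fun _ _ _ _ => eq_refl)).
  assert (Hsum : is_RInt (fun t => bracket (dv a t) (b t) + bracket (a t) (dv b t))
                  (tv 0%nat) (tv m)
                  (RInt (fun t => bracket (dv a t) (b t)) (tv 0%nat) (tv m) +
                   RInt (fun t => bracket (a t) (dv b t)) (tv 0%nat) (tv m)))
    by exact (is_RInt_plus _ _ _ _ _ _ Y X).
  apply is_RInt_unique_R in Hsum.
  rewrite (is_RInt_unique_R _ _ _ _ (is_RInt_bracket_arcs tv m a b Hm Ha Hb m (le_n m))) in Hsum.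
  assert (Hswap : RInt (fun t => bracket (b t) (dv a t)) (tv 0%nat) (tv m) =
                  -1 * RInt (fun t => bracket (dv a t) (b t)) (tv 0%nat) (tv m)).
  { rewrite <- (RInt_scal_of_is_RInt _ _ _ _ _ Y).
    apply RInt_ext. intros t _. simpl. unfold bracket; ring. }
  rewrite Hswap. lra.
Qed.

Lemma RInt_bracket_closed (tv : nat -> R) (m : nat) (T : R) (a b : R -> vec) :
  tv 0%nat = 0 -> tv m = 2 * T -> increasing_on tv 0 m ->
  arcwise_smooth tv 0 m a -> arcwise_smooth tv 0 m b ->
  a (2 * T) = a 0 -> b (2 * T) = b 0 ->
  RInt (fun t => bracket (a t) (dv b t)) 0 (2 * T) =
  RInt (fun t => bracket (b t) (dv a t)) 0 (2 * T).
Proof.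
  intros H0 Hm Hinc Ha Hb Pa Pb.
  assert (E := RInt_bracket_by_parts tv m a b Hinc Ha Hb).
  rewrite H0, Hm, Pa, Pb in E. lra.
Qed.

Lemma RInt_fold (tv : nat -> R) (n : nat) (T : R) (f h : R -> R) :
  tv 0%nat = 0 -> tv n = T -> tv (2 * n)%nat = 2 * T -> increasing_on tv 0 (2 * n) ->
  arcwise_continuous tv 0 (2 * n) f -> arcwise_continuous tv 0 n h ->
  (forall i t, (0 <= i < n)%nat -> tv i < t < tv (S i) -> f t + f (t + T) = h t) ->
  RInt f 0 (2 * T) = RInt h 0 T.
Proof.
  intros H0 Hn H2n Hinc Hf Hh Hfold.
  assert (Hinc1 : increasing_on tv 0 n) by (intros i Hi; apply Hinc; lia).
  assert (Hinc2 : increasing_on tv n (2 * n)) by (intros i Hi; apply Hinc; lia).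
  assert (F1 : is_RInt f 0 T (RInt f 0 T)).
  { assert (I := is_RInt_arcwise tv 0 n Hinc1 f f ltac:(lia)
                   ltac:(intros i Hi; apply Hf; lia) (fun _ _ _ _ => eq_refl)).
    rewrite H0, Hn in I. exact I. }
  assert (F2 : is_RInt (fun t => f (t + T)) 0 T (RInt f T (2 * T))).
  { assert (I := is_RInt_arcwise tv n (2 * n) Hinc2 f f ltac:(lia)
                   ltac:(intros i Hi; apply Hf; lia) (fun _ _ _ _ => eq_refl)).
    rewrite Hn, H2n in I. apply is_RInt_shift.
    replace (0 + T) with T by ring. replace (T + T) with (2 * T) by ring. exact I. }
  assert (F2' : is_RInt f T (2 * T) (RInt f T (2 * T))).
  { assert (I := is_RInt_arcwise tv n (2 * n) Hinc2 f f ltac:(lia)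
                   ltac:(intros i Hi; apply Hf; lia) (fun _ _ _ _ => eq_refl)).
    rewrite Hn, H2n in I. exact I. }
  assert (Hh' : is_RInt (fun t => f t + f (t + T)) 0 T (RInt h 0 T)).
  { assert (I := is_RInt_arcwise tv 0 n Hinc1 (fun t => f t + f (t + T)) h ltac:(lia) Hh Hfold).
    rewrite H0, Hn in I. exact I. }
  rewrite (is_RInt_unique_R _ _ _ _ (is_RInt_Chasles _ _ _ _ _ _ F1 F2')).
  rewrite <- (is_RInt_unique_R _ _ _ _ Hh').
  symmetry. exact (is_RInt_unique_R _ _ _ _ (is_RInt_plus _ _ _ _ _ _ F1 F2)).
Qed.

(** ** Tangents of the unit circle avoid the origin *)

(** A convex, centrally symmetric set with an interior point contains a ball
    around the origin: the origin is the midpoint of [p + q] and [-(p - q)]. *)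
Lemma ball_around_origin (U : pset) :
  p_convex U -> p_symmetric U -> (exists p, p_interior U p) ->
  exists e, 0 < e /\ forall q, vdist q vzero < e -> U q.
Proof.
  intros Hc Hs [p [e [He Hp]]]. exists e; split; auto. intros q Hq.
  assert (A : U (vadd p q)).
  { apply Hp. replace (vdist (vadd p q) p) with (vdist q vzero); auto.
    unfold vdist, vadd, vzero; simpl. f_equal; ring. }
  assert (B : U (vopp (vadd p (vopp q)))).
  { apply Hs, Hp. replace (vdist (vadd p (vopp q)) p) with (vdist q vzero); auto.
    unfold vdist, vadd, vopp, vzero; simpl. f_equal; ring. }
  replace q with (vadd (vscal (1 - 1 / 2) (vadd p q)) (vscal (1 / 2) (vopp (vadd p (vopp q))))).
  - apply Hc; auto; lra.
  - apply vec_ext; unfold vadd, vscal, vopp; simpl; field.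
Qed.

Lemma overshoot_coordinate (q x y e0 s : R) : 0 < e0 -> 0 < s ->
  Rabs (q - x) < e0 * s / (4 * (1 + s)) -> Rabs (y - (1 + s) * x) <= e0 * s / 8 ->
  Rabs (((1 + s) * q - y) / s) < e0 / 2.
Proof.
  intros He0 Hs Hq Hy.
  assert (Hes : 0 < e0 * s) by nra.
  assert (Hq' : (1 + s) * Rabs (q - x) < e0 * s / 4).
  { replace (e0 * s / 4) with ((1 + s) * (e0 * s / (4 * (1 + s)))) by (field; lra).
    apply Rmult_lt_compat_l; lra. }
  assert (Hnum : Rabs ((1 + s) * q - y) < e0 * s / 2).
  { replace ((1 + s) * q - y) with ((1 + s) * (q - x) - (y - (1 + s) * x)) by ring.
    eapply Rle_lt_trans; [apply Rabs_triang|].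
    rewrite Rabs_Ropp, Rabs_mult, (Rabs_pos_eq (1 + s)) by lra. lra. }
  unfold Rdiv. rewrite Rabs_mult, Rabs_inv, (Rabs_pos_eq s) by lra.
  apply (Rmult_lt_reg_r s); [lra|]. rewrite Rmult_assoc, Rinv_l, Rmult_1_r by lra. lra.
Qed.

(** If a convex set containing the ball [B(0, e0)] has a point [y] close to the
    radial overshoot [(1 + s) x] of [x], then [x] is interior: every [q] near [x]
    is a convex combination of [y] and a point [z] of the ball. *)
Lemma interior_of_radial_overshoot (U : pset) (x y : vec) (e0 s : R) :
  p_convex U -> 0 < e0 -> (forall q, vdist q vzero < e0 -> U q) -> 0 < s -> U y ->
  Rabs (fst y - (1 + s) * fst x) <= e0 * s / 8 ->
  Rabs (snd y - (1 + s) * snd x) <= e0 * s / 8 ->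
  p_interior U x.
Proof.
  intros Hc He0 Hball Hs Hy E1 E2.
  exists (e0 * s / (4 * (1 + s))). split; [apply Rdiv_lt_0_compat; nra|].
  intros q Hq.
  set (z := (((1 + s) * fst q - fst y) / s, ((1 + s) * snd q - snd y) / s)).
  assert (Hz : U z).
  { apply Hball. eapply Rle_lt_trans; [apply vdist_le_l1|]. unfold z, vzero; simpl.
    rewrite !Rminus_0_r.
    assert (B1 := overshoot_coordinate _ _ _ _ _ He0 Hs
                    (Rle_lt_trans _ _ _ (vdist_fst q x) Hq) E1).
    assert (B2 := overshoot_coordinate _ _ _ _ _ He0 Hs
                    (Rle_lt_trans _ _ _ (vdist_snd q x) Hq) E2).
    lra. }
  assert (Hl : 0 <= s / (1 + s) <= 1).
  { split; [apply Rdiv_le_0_compat; lra|].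
    apply (Rmult_le_reg_r (1 + s)); [lra|]. field_simplify; lra. }
  replace q with (vadd (vscal (1 - s / (1 + s)) y) (vscal (s / (1 + s)) z)).
  - exact (Hc _ _ _ Hy Hz Hl).
  - apply vec_ext; unfold vadd, vscal, z; simpl; field; lra.
Qed.

Lemma derivative_increment_bound (f : R -> R) (t d K : R) :
  derivable_pt_lim f t d -> 0 < K ->
  exists D, 0 < D /\ forall h, 0 < Rabs h < D -> Rabs (f (t + h) - f t - h * d) <= K * Rabs h.
Proof.
  intros Hd HK. destruct (Hd K HK) as [D HD]. exists D; split; [apply cond_pos|].
  intros h [Hh0 HhD].
  assert (Hh : h <> 0) by (intro; subst; rewrite Rabs_R0 in Hh0; lra).
  replace (f (t + h) - f t - h * d) with (h * ((f (t + h) - f t) / h - d)) by (field; auto).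
  rewrite Rabs_mult. assert (E := HD h Hh HhD). nra.
Qed.

(** A point of a convex set containing [B(0, e0)] that lies on a differentiable
    curve inside the set, whose velocity is nonzero and radial, is interior:
    moving along the curve overshoots it radially. *)
Lemma radial_velocity_interior (U : pset) (f1 f2 : R -> R) (t d1 d2 e0 D0 : R) :
  p_convex U -> 0 < e0 -> (forall q, vdist q vzero < e0 -> U q) -> 0 < D0 ->
  (forall h, Rabs h < D0 -> U (f1 (t + h), f2 (t + h))) ->
  derivable_pt_lim f1 t d1 -> derivable_pt_lim f2 t d2 ->
  (d1, d2) <> vzero -> bracket (f1 t, f2 t) (d1, d2) = 0 ->
  p_interior U (f1 t, f2 t).
Proof.
  intros Hc He0 Hball HD0 HU Hd1 Hd2 Hd Hw.
  destruct (vec_eq_dec (f1 t, f2 t) vzero) as [Z|Hx].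
  { rewrite Z. exists e0; split; auto. }
  destruct (bracket_zero_proportional _ _ Hx Hw) as [mu Emu].
  unfold vscal in Emu; simpl in Emu. injection Emu as Em1 Em2.
  assert (Hmu : 0 < Rabs mu).
  { apply Rabs_pos_lt. intro Z; apply Hd. rewrite Em1, Em2, Z.
    apply vec_ext; simpl; ring. }
  set (K := e0 * Rabs mu / 8).
  assert (HK : 0 < K) by (unfold K; nra).
  destruct (derivative_increment_bound f1 t d1 K Hd1 HK) as [D1 [HD1 B1]].
  destruct (derivative_increment_bound f2 t d2 K Hd2 HK) as [D2 [HD2 B2]].
  set (hm := Rmin D0 (Rmin D1 D2) / 2).
  assert (Hhm : 0 < hm /\ hm < D0 /\ hm < D1 /\ hm < D2).
  { unfold hm. assert (H1 := Rmin_l D0 (Rmin D1 D2)). assert (H2 := Rmin_r D0 (Rmin D1 D2)).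
    assert (H3 := Rmin_l D1 D2). assert (H4 := Rmin_r D1 D2).
    assert (0 < Rmin D0 (Rmin D1 D2)) by (repeat apply Rmin_pos; lra). lra. }
  (* the step h is taken in the direction in which the velocity points outwards *)
  assert (Hh : exists h, Rabs h = hm /\ mu * h = Rabs mu * hm).
  { destruct (Rcase_abs mu).
    - exists (- hm). rewrite Rabs_Ropp, Rabs_pos_eq, Rabs_left by lra. split; auto; ring.
    - exists hm. rewrite !Rabs_pos_eq by lra. auto. }
  destruct Hh as [h [Hah Hmh]].
  assert (Hs : 0 < Rabs mu * hm) by nra.
  assert (HKs : K * Rabs h = e0 * (Rabs mu * hm) / 8) by (rewrite Hah; unfold K; field).
  apply (interior_of_radial_overshoot U _ (f1 (t + h), f2 (t + h)) e0 (Rabs mu * hm));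
    simpl; auto.
  - apply HU; lra.
  - rewrite <- HKs. replace (f1 (t + h) - (1 + Rabs mu * hm) * f1 t)
      with (f1 (t + h) - f1 t - h * d1) by (rewrite Em1, <- Hmh; ring).
    apply B1; lra.
  - rewrite <- HKs. replace (f2 (t + h) - (1 + Rabs mu * hm) * f2 t)
      with (f2 (t + h) - f2 t - h * d2) by (rewrite Em2, <- Hmh; ring).
    apply B2; lra.
Qed.

Lemma tv_monotone (tv : nat -> R) (m : nat) : increasing_on tv 0 m ->
  forall a b, (a <= b <= m)%nat -> tv a <= tv b.
Proof.
  intros H a b Hab. induction b.
  - assert (a = 0)%nat by lia. subst; lra.
  - destruct (Nat.eq_dec a (S b)); [subst; lra|].
    assert (tv a <= tv b) by (apply IHb; lia).
    assert (tv b < tv (S b)) by (apply H; lia). lra.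
Qed.

Lemma open_arc_not_vertex (n : nat) (tv : nat -> R) (i : nat) (t : R) :
  increasing_on tv 0 (2 * n) -> (i < 2 * n)%nat -> tv i < t < tv (S i) -> ~ is_vertex n tv t.
Proof.
  intros Hm Hi Ht [j [Hj E]]. subst t.
  destruct (Compare_dec.le_lt_dec j i).
  - assert (tv j <= tv i) by (apply (tv_monotone tv (2 * n)); auto; lia). lra.
  - assert (tv (S i) <= tv j) by (apply (tv_monotone tv (2 * n)); auto; lia). lra.
Qed.

Lemma standing_partition (U : pset) (T : R) (n : nat) (tv : nat -> R) (u : R -> vec) :
  standing_setting U T n tv u ->
  tv 0%nat = 0 /\ tv n = T /\ tv (2 * n)%nat = 2 * T /\ increasing_on tv 0 (2 * n) /\
  (forall i, (i <= n)%nat -> tv (i + n)%nat = tv i + T) /\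
  (forall t, u (t + T) = vopp (u t)) /\ arcwise_smooth tv 0 (2 * n) u.
Proof.
  intros [_ [_ [_ [_ [_ [_ [H0 [H2n [Hlt [Hsh [Husym [_ [_ Harcs]]]]]]]]]]]]].
  assert (Hn : tv n = T) by (rewrite <- (Rplus_0_l T), <- H0; exact (Hsh 0%nat (Nat.le_0_l n))).
  repeat split; auto.
  - intros i Hi; apply Hlt; lia.
  - intros i Hi. destruct (Harcs i ltac:(lia)) as [g [Sg [Hg _]]].
    exists g; split; auto. intros s Hs; apply Hg; auto.
Qed.

Lemma admissible_arcwise_smooth (T : R) (n : nat) (tv : nat -> R) (u g : R -> vec) (r : R -> R) :
  admissible T n tv u g r -> arcwise_smooth tv 0 (2 * n) g.
Proof. intros [_ [_ [H _]]] i Hi. apply H; lia. Qed.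

Lemma admissible_closed (T : R) (n : nat) (tv : nat -> R) (u g : R -> vec) (r : R -> R) :
  admissible T n tv u g r -> g (2 * T) = g 0.
Proof. intros [_ [Hper _]]. rewrite <- (Rplus_0_l (2 * T)). apply Hper. Qed.

Lemma is_derive_dv_arc (tv : nat -> R) (m i : nat) (a : R -> vec) (t : R) :
  arcwise_smooth tv 0 m a -> (i < m)%nat -> tv i < t < tv (S i) ->
  is_derive (fun s => fst (a s)) t (fst (dv a t)) /\
  is_derive (fun s => snd (a s)) t (snd (dv a t)).
Proof.
  intros H Hi Ht. destruct (H i ltac:(lia)) as [A [SA HA]].
  exact (is_derive_dv_interior a A _ _ t Ht HA SA).
Qed.

(** Otherwise the velocity [u'] is radial, and since U contains
    a ball around the origin the boundary point [u(t)] would be interior. *)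
Lemma bracket_u_du_nonzero (U : pset) (T : R) (n : nat) (tv : nat -> R) (u : R -> vec)
    (i : nat) (t : R) :
  standing_setting U T n tv u -> (i < 2 * n)%nat -> tv i < t < tv (S i) ->
  bracket (u t) (dv u t) <> 0.
Proof.
  intros Hst Hi Ht Hw.
  destruct Hst as [[_ Hclosed] [Hconv [Hsym [Hint [_ [_ [H0 [H2n [Hlt [_ [_ [Hbd [_ Harcs]]]]]]]]]]]]].
  destruct (ball_around_origin U Hconv Hsym Hint) as [e0 [He0 Hball]].
  destruct (Harcs i Hi) as [g [Sg [Hg _]]].
  assert (Heq : forall s, tv i <= s <= tv (S i) -> u s = g s) by (intros; apply Hg; auto).
  assert (Hdv : dv u t <> vzero).
  { rewrite (dv_eq_interior u g (tv i) (tv (S i)) t Ht Heq). apply Hg; lra. }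
  assert (Hinc : increasing_on tv 0 (2 * n)) by (intros j Hj; apply Hlt; lia).
  assert (B0 : tv 0%nat <= tv i) by (apply (tv_monotone tv (2 * n)); auto; lia).
  assert (B1 : tv (S i) <= tv (2 * n)%nat) by (apply (tv_monotone tv (2 * n)); auto; lia).
  assert (Hbt : p_boundary U (u t)) by (apply Hbd; exists t; split; [lra | reflexivity]).
  destruct (is_derive_dv_interior u g _ _ t Ht Heq Sg) as [D1 D2].
  apply is_derive_Reals in D1. apply is_derive_Reals in D2.
  set (D0 := Rmin (t - tv i) (tv (S i) - t)).
  assert (HD0 : 0 < D0) by (apply Rmin_pos; lra).
  (* nearby points of the arc lie on the boundary, hence in the closed set U *)
  assert (Hnear : forall h, Rabs h < D0 -> U (fst (u (t + h)), snd (u (t + h)))).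
  { intros h Hh. rewrite <- surjective_pairing. apply Hclosed.
    assert (H1 := Rmin_l (t - tv i) (tv (S i) - t)).
    assert (H2 := Rmin_r (t - tv i) (tv (S i) - t)).
    apply Rabs_def2 in Hh. unfold D0 in Hh.
    assert (Hth : 0 <= t + h <= 2 * T) by lra.
    exact (proj1 (proj2 (Hbd (u (t + h))) (ex_intro _ (t + h) (conj Hth eq_refl)))). }
  apply (proj2 Hbt). rewrite (surjective_pairing (u t)).
  apply (radial_velocity_interior U (fun s => fst (u s)) (fun s => snd (u s)) t
           (fst (dv u t)) (snd (dv u t)) e0 D0 Hconv He0 Hball HD0 Hnear D1 D2).
  - rewrite <- surjective_pairing. exact Hdv.
  - rewrite <- !surjective_pairing. exact Hw.
Qed.

Lemma Derive_antiperiodic (f : R -> R) (t T D : R) :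
  (forall s, f (s + T) = - f s) -> is_derive f (t + T) D -> Derive f t = - D.
Proof.
  intros Hf HD. apply is_derive_unique.
  apply (is_derive_ext (fun s => - f (s + T))); [intros s; simpl; rewrite Hf; ring|].
  assert (E : ex_derive f (t + T)) by (exists D; auto).
  replace (- D) with (- Derive f (t + T)) by (rewrite (is_derive_unique _ _ _ HD); reflexivity).
  auto_derive; [exact E | rewrite Rmult_1_l; reflexivity].
Qed.

Lemma dv_antiperiodic (g : R -> vec) (T t : R) : (forall s, g (s + T) = vopp (g s)) ->
  is_derive (fun s => fst (g s)) (t + T) (fst (dv g (t + T))) ->
  is_derive (fun s => snd (g s)) (t + T) (snd (dv g (t + T))) ->
  dv g (t + T) = vopp (dv g t).
Proof.
  intros Hg D1 D2. unfold dv at 2, vopp; simpl.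
  rewrite (Derive_antiperiodic (fun s => fst (g s)) t T _
             ltac:(intros s; cbv beta; rewrite Hg; reflexivity) D1).
  rewrite (Derive_antiperiodic (fun s => snd (g s)) t T _
             ltac:(intros s; cbv beta; rewrite Hg; reflexivity) D2).
  apply vec_ext; simpl; ring.
Qed.

Lemma antiperiodic_closed (g : R -> vec) (T : R) :
  (forall s, g (s + T) = vopp (g s)) -> g (2 * T) = g 0.
Proof.
  intros H. replace (2 * T) with ((0 + T) + T) by ring. rewrite !H.
  apply vec_ext; unfold vopp; simpl; ring.
Qed.

(** Since [v] is [u'] normalized by [[u, u']], it is antiperiodic with [u]. *)
Lemma vfield_antiperiodic (u : R -> vec) (T t : R) :
  u (t + T) = vopp (u t) -> dv u (t + T) = vopp (dv u t) ->
  vfield u (t + T) = vopp (vfield u t).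
Proof.
  intros Eu Edu. unfold vfield. rewrite Eu, Edu.
  replace (bracket (vopp (u t)) (vopp (dv u t))) with (bracket (u t) (dv u t))
    by (unfold bracket, vopp; simpl; ring).
  apply vec_ext; unfold vscal, vopp; simpl; ring.
Qed.

Lemma dv_vscal (lam : R) (a : R -> vec) (t : R) :
  dv (fun s => vscal lam (a s)) t = vscal lam (dv a t).
Proof.
  unfold dv, vscal; simpl.
  rewrite (Derive_scal (fun s => fst (a s))), (Derive_scal (fun s => snd (a s))). reflexivity.
Qed.

Lemma is_RInt_bracket_dv (tv : nat -> R) (m : nat) (T : R) (a b : R -> vec) :
  tv 0%nat = 0 -> tv m = 2 * T -> increasing_on tv 0 m ->
  arcwise_smooth tv 0 m a -> arcwise_smooth tv 0 m b ->
  is_RInt (fun t => bracket (a t) (dv b t)) 0 (2 * T)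
    (RInt (fun t => bracket (a t) (dv b t)) 0 (2 * T)).
Proof.
  intros H0 Hm Hinc Ha Hb. rewrite <- H0, <- Hm.
  apply (is_RInt_arcwise tv 0 m Hinc); [lia | | reflexivity].
  apply arcwise_continuous_bracket_dv; auto.
Qed.

(** Since [g' = r u'] off the vertices, the dual length is [int [u, g']]. *)
Lemma Lstar_bracket (U : pset) (T : R) (n : nat) (tv : nat -> R) (u g : R -> vec) (r : R -> R) :
  standing_setting U T n tv u -> admissible T n tv u g r ->
  Lstar T u r = RInt (fun t => bracket (u t) (dv g t)) 0 (2 * T).
Proof.
  intros Hst Hadm.
  destruct (standing_partition _ _ _ _ _ Hst) as [H0 [_ [H2n [Hinc [_ [_ Hu]]]]]].
  unfold Lstar. rewrite <- H0, <- H2n. apply is_RInt_unique_R.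
  apply (is_RInt_arcwise tv 0 (2 * n) Hinc); [lia| |].
  - apply arcwise_continuous_bracket_dv; auto. eapply admissible_arcwise_smooth; eauto.
  - intros i t Hi Ht. destruct Hadm as [_ [_ [_ Hd]]]. rewrite (Hd i t ltac:(lia) Ht).
    unfold bracket, vscal; simpl; ring.
Qed.

(** ** Orthogonality to the line R·u *)

Lemma mixed_area_line (U : pset) (T : R) (n : nat) (tv : nat -> R) (u g : R -> vec)
    (r : R -> R) (lam : R) :
  standing_setting U T n tv u -> admissible T n tv u g r ->
  mixed_area T g (fun t => vscal lam (u t)) = / 2 * (lam * Lstar T u r) /\
  mixed_area T (fun t => vscal lam (u t)) g = / 2 * (lam * Lstar T u r).
Proof.
  intros Hst Hadm.
  destruct (standing_partition _ _ _ _ _ Hst) as [H0 [_ [H2n [Hinc [_ [Husym Hu]]]]]].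
  assert (Hg := admissible_arcwise_smooth _ _ _ _ _ _ Hadm).
  rewrite (Lstar_bracket U T n tv u g r Hst Hadm). unfold mixed_area. split.
  - rewrite <- (RInt_bracket_closed tv (2 * n) T g u H0 H2n Hinc Hg Hu
                  (admissible_closed _ _ _ _ _ _ Hadm) (antiperiodic_closed u T Husym)).
    rewrite <- (RInt_scal_of_is_RInt _ _ _ lam _ (is_RInt_bracket_dv tv (2 * n) T g u H0 H2n Hinc Hg Hu)).
    f_equal. apply RInt_ext. intros t _. rewrite dv_vscal. simpl.
    unfold bracket, vscal; simpl; ring.
  - rewrite <- (RInt_scal_of_is_RInt _ _ _ lam _ (is_RInt_bracket_dv tv (2 * n) T u g H0 H2n Hinc Hu Hg)).
    f_equal. apply RInt_ext. intros t _. simpl. unfold bracket, vscal; simpl; ring.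
Qed.

(** ** Orthogonality of C_0^sym and C_0^cw *)

(** The constant-width condition, rewritten with [v(t + T) = -v(t)] and
    multiplied by [r [u, u']]. *)
Lemma width_identity (x d p q : vec) (r c : R) : bracket x d <> 0 ->
  bracket q (vopp (vscal (/ bracket x d) d)) + bracket p (vscal (/ bracket x d) d) = c ->
  bracket p (vscal r d) + bracket q (vopp (vscal r d)) = c * bracket x (vscal r d).
Proof.
  intros Hw Hc. rewrite <- Hc.
  destruct x as [x1 x2], d as [d1 d2], p as [p1 p2], q as [q1 q2].
  unfold bracket, vscal, vopp in *; simpl in *. field. exact Hw.
Qed.

Lemma sym_cw_pointwise (U : pset) (T : R) (n : nat) (tv : nat -> R) (u g1 g2 : R -> vec)
    (r1 : R -> R) (c : R) (i : nat) (t : R) :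
  standing_setting U T n tv u -> in_C0_sym T n tv u g1 r1 ->
  (forall s, 0 <= s <= 2 * T -> ~ is_vertex n tv s ->
     bracket (g2 (s + T)) (vfield u (s + T)) + bracket (g2 s) (vfield u s) = c) ->
  (i < n)%nat -> tv i < t < tv (S i) ->
  bracket (g2 t) (dv g1 t) + bracket (g2 (t + T)) (dv g1 (t + T)) =
    c * bracket (u t) (dv g1 t) /\
  bracket (u t) (dv g1 t) + bracket (u (t + T)) (dv g1 (t + T)) =
    2 * bracket (u t) (dv g1 t).
Proof.
  intros Hst [Hadm [Hsym _]] Hcw Hi Ht.
  destruct (standing_partition _ _ _ _ _ Hst) as [H0 [Hn [H2n [Hinc [Hsh [Husym Hu]]]]]].
  assert (Hg := admissible_arcwise_smooth _ _ _ _ _ _ Hadm).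
  assert (HtT : tv (i + n)%nat < t + T < tv (S (i + n))).
  { rewrite (Hsh i ltac:(lia)). replace (S (i + n)) with (S i + n)%nat by lia.
    rewrite (Hsh (S i) ltac:(lia)). lra. }
  assert (HinT : (i + n < 2 * n)%nat) by lia.
  destruct (is_derive_dv_arc tv _ _ u _ Hu HinT HtT) as [Du1 Du2].
  destruct (is_derive_dv_arc tv _ _ g1 _ Hg HinT HtT) as [Dg1 Dg2].
  assert (Edu := dv_antiperiodic u T t Husym Du1 Du2).
  assert (Edg := dv_antiperiodic g1 T t Hsym Dg1 Dg2).
  assert (Hw := bracket_u_du_nonzero U T n tv u i t Hst ltac:(lia) Ht).
  assert (B0 : tv 0%nat <= tv i) by (apply (tv_monotone tv (2 * n)); auto; lia).
  assert (B1 : tv (S i) <= tv n) by (apply (tv_monotone tv (2 * n)); auto; lia).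
  assert (Hc := Hcw t ltac:(lra) (open_arc_not_vertex n tv i t Hinc ltac:(lia) Ht)).
  rewrite (vfield_antiperiodic u T t (Husym t) Edu) in Hc. unfold vfield in Hc.
  destruct Hadm as [_ [_ [_ Hd]]].
  rewrite Edg, (Hd i t ltac:(lia) Ht), Husym. split.
  - apply width_identity; assumption.
  - unfold bracket, vopp, vscal; simpl; ring.
Qed.

(** Folding [Q] and [M] onto [0, T] and using [L_*(g1) = 0]:
    [2 A(g1, g2) = int_0^{2T} Q = c int_0^T M = (c/2) L_*(g1) = 0]. *)
Lemma mixed_area_sym_cw (U : pset) (T : R) (n : nat) (tv : nat -> R) (u : R -> vec)
    (g1 g2 : R -> vec) (r1 r2 : R -> R) :
  standing_setting U T n tv u ->
  in_C0_sym T n tv u g1 r1 -> in_C0_cw T n tv u g2 r2 -> mixed_area T g1 g2 = 0.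
Proof.
  intros Hst Hsym1 [Had2 [_ [c Hcw]]].
  assert (Had1 := proj1 Hsym1). assert (HL1 := proj2 (proj2 Hsym1)).
  destruct (standing_partition _ _ _ _ _ Hst) as [H0 [Hn [H2n [Hinc [_ [_ Hu]]]]]].
  assert (Hg1 := admissible_arcwise_smooth _ _ _ _ _ _ Had1).
  assert (Hg2 := admissible_arcwise_smooth _ _ _ _ _ _ Had2).
  set (Q := fun t => bracket (g2 t) (dv g1 t)).
  set (M := fun t => bracket (u t) (dv g1 t)).
  assert (HQ : arcwise_continuous tv 0 (2 * n) Q) by (apply arcwise_continuous_bracket_dv; auto).
  assert (HM : arcwise_continuous tv 0 (2 * n) M) by (apply arcwise_continuous_bracket_dv; auto).
  assert (HM0 : arcwise_continuous tv 0 n M) by (intros i Hi; apply HM; lia).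
  (* int_0^{2T} M = L_*(g1) = 0 and M is T-periodic, so int_0^T M = 0 *)
  assert (FoldM : RInt M 0 (2 * T) = RInt (fun t => 2 * M t) 0 T).
  { apply (RInt_fold tv n); auto; [apply arcwise_continuous_scal; auto|].
    intros i t Hi Ht. exact (proj2 (sym_cw_pointwise U T n tv u g1 g2 r1 c i t Hst Hsym1 Hcw ltac:(lia) Ht)). }
  assert (IM : is_RInt M 0 T (RInt M 0 T)).
  { rewrite <- H0, <- Hn.
    apply (is_RInt_arcwise tv 0 n); auto; [intros i Hi; apply Hinc; lia | lia]. }
  assert (HalfM : RInt M 0 T = 0).
  { assert (E := Lstar_bracket U T n tv u g1 r1 Hst Had1). fold M in E.
    rewrite FoldM, HL1, (RInt_scal_of_is_RInt _ _ _ 2 _ IM) in E. lra. }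
  (* int_0^{2T} Q = c int_0^T M by the constant-width identity *)
  assert (FoldQ : RInt Q 0 (2 * T) = RInt (fun t => c * M t) 0 T).
  { apply (RInt_fold tv n); auto; [apply arcwise_continuous_scal; auto|].
    intros i t Hi Ht. exact (proj1 (sym_cw_pointwise U T n tv u g1 g2 r1 c i t Hst Hsym1 Hcw ltac:(lia) Ht)). }
  unfold mixed_area.
  rewrite (RInt_bracket_closed tv (2 * n) T g1 g2 H0 H2n Hinc Hg1 Hg2
             (admissible_closed _ _ _ _ _ _ Had1) (admissible_closed _ _ _ _ _ _ Had2)).
  fold Q. rewrite FoldQ, (RInt_scal_of_is_RInt _ _ _ c _ IM), HalfM. ring.
Qed.

Theorem mainTheorem7 (U : pset) (T : R) (n : nat) (tv : nat -> R) (u : R -> vec) :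
  standing_setting U T n tv u ->
  (forall g1 r1 g2 r2,
     in_C0_sym T n tv u g1 r1 -> in_C0_cw T n tv u g2 r2 ->
     mixed_area T g1 g2 = 0) /\
  (forall g r lam, in_C0_sym T n tv u g r ->
     mixed_area T g (fun t => vscal lam (u t)) = 0 /\
     mixed_area T (fun t => vscal lam (u t)) g = 0) /\
  (forall g r lam, in_C0_cw T n tv u g r ->
     mixed_area T g (fun t => vscal lam (u t)) = 0 /\
     mixed_area T (fun t => vscal lam (u t)) g = 0).
Proof.
  intros Hst. split; [|split].
  - intros g1 r1 g2 r2 H1 H2. exact (mixed_area_sym_cw U T n tv u g1 g2 r1 r2 Hst H1 H2).
  - intros g r lam [Hadm [_ HL]].
    destruct (mixed_area_line U T n tv u g r lam Hst Hadm) as [E1 E2].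
    rewrite E1, E2, HL. split; ring.
  - intros g r lam [Hadm [HL _]].
    destruct (mixed_area_line U T n tv u g r lam Hst Hadm) as [E1 E2].
    rewrite E1, E2, HL. split; ring.
Qed.
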